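(* Let $k\ge1$ and let $p=(p_1,\dots,p_n)$ be a parking function. Then the permutation $\pi(p)$ avoids the pattern $12\cdots(k+1)$ if and only if the word $p_1\cdots p_n$ contains no weakly increasing subsequence of length $k+1$, i.e. there are no indices $i_1<\dots<i_{k+1}$ with $p_{i_1}\le p_{i_2}\le\dots\le p_{i_{k+1}}$.
   Context: $[n]=\{1,\dots,n\}$. A tuple $p\in[n]^n$ is a parking function if its weakly increasing rearrangement $(p'_1,\dots,p'_n)$ satisfies $p'_i\le i$ for all $i$. $\pi(p)$ is the permutation obtained by listing, for $s=1,\dots,n$ in turn, the indices $j$ with $p_j=s$ in increasing order, and concatenating. A permutation avoids $\sigma\in\mathfrak S_m$ if none of its length-$m$ subsequences is order-isomorphic to $\sigma$. *)

From mathcomp Require Import all_boot.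
Set Implicit Arguments. Unset Strict Implicit. Unset Printing Implicit Defensive.

(* Tuples/words are represented as sequences of naturals, with p_i = nth 0 p (i-1). *)

Definition parking_function (n : nat) (p : seq nat) : Prop :=
  size p = n /\ (forall x, x \in p -> 1 <= x <= n) /\
  (forall i, i < n -> nth 0 (sort leq p) i <= i.+1).

(* pi(p): for s = 1..n, list the indices j (1-based) with p_j = s in increasing
   order, and concatenate.  The result is a permutation of [n] in one-line notation. *)
Definition pf_perm (p : seq nat) : seq nat :=
  let n := size p in
  flatten [seq [seq j <- iota 1 n | nth 0 p j.-1 == s] | s <- iota 1 n].

Definition order_iso (s t : seq nat) : Prop :=
  size s = size t /\
  forall i j, i < size s -> j < size s ->
    (nth 0 s i < nth 0 s j) = (nth 0 t i < nth 0 t j).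

Definition contains_pattern (w sigma : seq nat) : Prop :=
  exists s, subseq s w /\ order_iso s sigma.

Definition avoids (w sigma : seq nat) : Prop := ~ contains_pattern w sigma.

Definition has_weak_incr_subseq (w : seq nat) (m : nat) : Prop :=
  exists s, subseq s w /\ size s = m /\ sorted leq s.

From mathcomp Require Import all_boot.
From mathcomp Require Import zify.

Set Implicit Arguments.
Unset Strict Implicit.
Unset Printing Implicit Defensive.

(* The permutation pi(p) is the stable sort of the positions 1, ..., n by the
   key j |-> p_j.  In a stable sort of increasing positions, a position i
   precedes a position j > i exactly when p_i <= p_j; hence the increasing
   subsequences of pi(p) are exactly the position sets on which p is weakly
   increasing. *)

Lemma contains_iota_pattern (w : seq nat) m :
  contains_pattern w (iota 1 m) <->
  exists s, subseq s w /\ size s = m /\ sorted ltn s.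
Proof.
have iso_iota s : order_iso s (iota 1 m) <-> size s = m /\ sorted ltn s.
  rewrite /order_iso size_iota; split=> [[size_s iso_s] | [size_s ltn_s]].
    split=> //; apply/(sortedP 0) => i lt_i1.
    have := iso_s i i.+1 (ltnW lt_i1) lt_i1.
    by rewrite !nth_iota -?size_s ?(ltnW lt_i1) // addnS ltnSn.
  split=> // i j lt_i lt_j; rewrite !nth_iota -?size_s // ltn_add2l.
  have lt_nth := sorted_ltn_nth ltn_trans 0 ltn_s.
  case: (ltngtP i j) => [ij | ji | ->]; last by rewrite !ltnn.
  - exact: lt_nth.
  - by apply/negbTE; rewrite -leqNgt ltnW // lt_nth.
split=> [[s [sub_s /iso_iota]] | [s [sub_s /iso_iota]]]; by exists s.
Qed.

Lemma sorted_ltn_subset_subseq (s t : seq nat) :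
  sorted ltn s -> sorted ltn t -> {subset s <= t} -> subseq s t.
Proof.
move=> ltn_s ltn_t sub_st.
have -> : s = [seq x <- t | x \in s].
  apply: (irr_sorted_eq ltn_trans ltnn) => //; first exact: (sorted_filter ltn_trans).
  by move=> x; rewrite mem_filter andb_idr //; apply: sub_st.
exact: filter_subseq.
Qed.

Lemma relpre_leq_total (T : Type) (f : T -> nat) : total (relpre f leq).
Proof. by move=> x y; apply: leq_total. Qed.

Lemma relpre_leq_trans (T : Type) (f : T -> nat) : transitive (relpre f leq).
Proof. by move=> y x z; apply: leq_trans. Qed.

Section SortByKey.

Variables (T : eqType) (f : T -> nat).

Local Notation le_key := (relpre f leq).
Let le_key_total := @relpre_leq_total T f.
Let le_key_trans := @relpre_leq_trans T f.

Lemma sorted_key_split a s :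
  sorted le_key s -> s = [seq x <- s | f x <= a] ++ [seq x <- s | a < f x].
Proof.
elim: s => //= x s IH path_xs; have sorted_s := path_sorted path_xs.
case: leqP => [_ | lt_a_x] /=; first by rewrite -IH.
have keys_gt x' : x' \in s -> a < f x'.
  by move=> /(allP (order_path_min le_key_trans path_xs)) /(leq_trans lt_a_x).
rewrite (eq_in_filter (a2 := pred0)); last by move=> x' /keys_gt /=; lia.
by rewrite filter_pred0 (all_filterP _) //; apply/allP.
Qed.

Lemma const_key_sorted a s : all (fun x => f x == a) s -> sorted le_key s.
Proof.
rewrite -sorted_map -(all_map f (pred1 a)) => /all_pred1P ->.
by rewrite size_map; elim: (size s) => // [[|m]] //= IH; rewrite leqnn.
Qed.

Lemma sort_key_blocks len a s :
  all (fun x => a <= f x < a + len) s ->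
  sort le_key s = flatten [seq [seq x <- s | f x == v] | v <- iota a len].
Proof.
elim: len a s => [|len IH] a s keys_s.
  by case: s keys_s => //= x s /andP[]; lia.
rewrite (sorted_key_split a (sort_sorted le_key_total s)).
rewrite !filter_sort //=; congr (_ ++ _).
  have -> : [seq x <- s | f x <= a] = [seq x <- s | f x == a].
    by apply: eq_in_filter => x /(allP keys_s) /=; lia.
  exact/sorted_sort/const_key_sorted/filter_all.
rewrite (IH a.+1); last first.
  by apply/allP => x; rewrite mem_filter => /andP[] /= + /(allP keys_s); lia.
congr flatten; apply/eq_in_map => v; rewrite mem_iota => v_gt_a.
by rewrite -filter_predI; apply: eq_in_filter => x _ /=; lia.
Qed.

End SortByKey.

Lemma incr_subseq_sort_key (f : nat -> nat) (t : seq nat) m :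
  sorted ltn t ->
  (exists s, subseq s (sort (relpre f leq) t) /\ size s = m /\ sorted ltn s) <->
  has_weak_incr_subseq (map f t) m.
Proof.
move=> ltn_t.
have le_key_total := @relpre_leq_total _ f.
have le_key_trans := @relpre_leq_trans _ f.
split=> [[s [sub_sw [size_s ltn_s]]] | [u [sub_u [size_u leq_u]]]].
  exists (map f s); split; last split; rewrite ?size_map //.
    apply/map_subseq/sorted_ltn_subset_subseq => // x /(mem_subseq sub_sw).
    by rewrite mem_sort.
  by rewrite sorted_map (subseq_sorted le_key_trans sub_sw) ?sort_sorted.
case/subseqP: sub_u => b size_b u_mask; rewrite -map_mask in u_mask.
exists (mask b t); split; last split.
- apply: sorted_subseq_sort => //; first exact: mask_subseq.
  by rewrite -sorted_map -u_mask.
- by rewrite -size_u u_mask size_map.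
- exact: (subseq_sorted ltn_trans (mask_subseq b t) ltn_t).
Qed.

Theorem corollary2p11 (k n : nat) (p : seq nat) :
  1 <= k -> parking_function n p ->
  (avoids (pf_perm p) (iota 1 k.+1) <-> ~ has_weak_incr_subseq p k.+1).
Proof.
move=> _ [size_p [range_p _]].
pose f j := nth 0 p j.-1.
have keys_range : all (fun j => 1 <= f j < 1 + n) (iota 1 n).
  apply/allP => j; rewrite mem_iota => j_pos.
  by rewrite add1n ltnS range_p // mem_nth ?size_p; lia.
have pf_perm_sort : pf_perm p = sort (relpre f leq) (iota 1 n).
  by rewrite (sort_key_blocks keys_range) /pf_perm size_p.
have key_word : map f (iota 1 n) = p.
  rewrite (iotaDl 1 0) -map_comp -[RHS](mkseq_nth 0) size_p.
  by apply: eq_map => i /=; rewrite add1n.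
by rewrite /avoids contains_iota_pattern pf_perm_sort -key_word -incr_subseq_sort_key ?iota_ltn_sorted.
Qed.
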